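(* There is a unique Lie algebra morphism $\rho_{\mathfrak g}:\bar{\mathfrak t}_{1,n}\to\mathcal H_n(\mathfrak g)$ such that $\bar x_i\mapsto\sum_\alpha \mathrm x_\alpha\otimes e_\alpha^{(i)}$, $\bar y_i\mapsto-\sum_\alpha\partial_\alpha\otimes e_\alpha^{(i)}$, $\bar t_{ij}\mapsto 1\otimes t_{\mathfrak g}^{(ij)}$ (classes in $\mathcal H_n(\mathfrak g)$).
   Context: $\mathfrak g$ is a finite-dimensional complex Lie algebra with nondegenerate invariant symmetric tensor $t_{\mathfrak g}\in S^2(\mathfrak g)^{\mathfrak g}$, inducing an invariant nondegenerate symmetric pairing $\langle\,,\rangle$; $(e_\alpha)$ is a basis with $t_{\mathfrak g}=\sum_\alpha e_\alpha\otimes e_\alpha$. $D(\mathfrak g)$ is the algebra generated by $\mathrm x_a,\partial_a$ ($a\in\mathfrak g$), linear in $a$, with $[\mathrm x_a,\mathrm x_b]=[\partial_a,\partial_b]=0$, $[\partial_a,\mathrm x_b]=\langle a,b\rangle$; $\mathrm x_\alpha=\mathrm x_{e_\alpha}$, $\partial_\alpha=\partial_{e_\alpha}$. $X_a=\sum_\alpha\mathrm x_{[a,e_\alpha]}\partial_{e_\alpha}$. $A_n=D(\mathfrak g)\otimes U(\mathfrak g)^{\otimes n}$, $Y_a=X_a\otimes1+1\otimes\sum_{i=1}^na^{(i)}$ (where $u^{(i)}$ is $u$ in the $i$-th factor), $\mathfrak g^{\mathrm{diag}}=\{Y_a\}$, and $\mathcal H_n(\mathfrak g)=\{x\in A_n:Y_ax\in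 A_n\mathfrak g^{\mathrm{diag}}\ \forall a\}/A_n\mathfrak g^{\mathrm{diag}}$ (Hecke algebra). $t_{\mathfrak g}^{(ij)}=\sum_\alpha e_\alpha^{(i)}e_\alpha^{(j)}$. $\bar{\mathfrak t}_{1,n}=\mathfrak t_{1,n}/(\sum x_i,\sum y_i)$ where $\mathfrak t_{1,n}$ has generators $x_i,y_i,t_{ij}$ and relations $t_{ij}=t_{ji}$, $[t_{ij},t_{ik}+t_{jk}]=0$, $[t_{ij},t_{kl}]=0$, $[x_i,y_j]=t_{ij}$ ($i\ne j$), $[x_i,x_j]=[y_i,y_j]=0$, $[x_i,y_i]=-\sum_{j\ne i}t_{ij}$, $[x_i,t_{jk}]=[y_i,t_{jk}]=0$, $[x_i+x_j,t_{ij}]=[y_i+y_j,t_{ij}]=0$ ($i,j,k,l$ distinct). *)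

From mathcomp Require Import all_boot all_order all_algebra.
Set Implicit Arguments.
Unset Strict Implicit.
Unset Printing Implicit Defensive.
Import Order.TTheory GRing.Theory Num.Theory.
Local Open Scope ring_scope.

(* The quadratic Lie algebra g: dimension d, basis (e_a)_{a < d} with        *)
(* t_g = sum_a e_a (x) e_a, hence <e_a, e_b> = delta_ab.  Bracket given by   *)
(* structure constants: [e_a, e_b] = sum_k c a b k e_k.                      *)
Definition quadratic_lie (F : fieldType) (d : nat) (c : 'I_d -> 'I_d -> 'I_d -> F) : Prop :=
  [/\
      forall a b k, c a b k = - c b a k,
      forall a b e k,
        \sum_(m < d) (c a b m * c m e k + c b e m * c m a k + c e a m * c m b k) = 0
    & (* invariance of the pairing: <[a,b],e> = <a,[b,e]> *)
      forall a b e, c a b e = c b e a].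

(* A_n = D(g) (x) U(g)^{(x) n}, presented by generators and relations.       *)
Inductive agen (d n : nat) : Type :=
  | GX of 'I_d            (* x_alpha (x) 1 *)
  | GD of 'I_d            (* d_alpha (x) 1 *)
  | GE of 'I_n & 'I_d.    (* 1 (x) e_alpha^(i) *)
Arguments GX {d n}. Arguments GD {d n}. Arguments GE {d n}.

Inductive aterm (F : fieldType) (d n : nat) : Type :=
  | AVar of agen d n
  | AConst of F
  | AAdd of aterm F d n & aterm F d n
  | AMul of aterm F d n & aterm F d n.
Arguments AVar {F d n}. Arguments AConst {F d n}.
Arguments AAdd {F d n}. Arguments AMul {F d n}.

Section Alg.
Variables (F : fieldType) (d n : nat) (c : 'I_d -> 'I_d -> 'I_d -> F).

Local Notation T := (aterm F d n).
Definition asum (s : seq T) : T := foldr (@AAdd F d n) (@AConst F d n 0) s.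
Definition ascale (k : F) (t : T) : T := AMul (@AConst F d n k) t.
Definition asub (t u : T) : T := AAdd t (ascale (-1) u).
Definition aX (a : 'I_d) : T := AVar (GX a).
Definition aD (a : 'I_d) : T := AVar (GD a).
Definition aE (i : 'I_n) (a : 'I_d) : T := AVar (GE i a).

Inductive arel : T -> T -> Prop :=
  | arel_xx a b : arel (AMul (aX a) (aX b)) (AMul (aX b) (aX a))
  | arel_dd a b : arel (AMul (aD a) (aD b)) (AMul (aD b) (aD a))
  | arel_dx a b : arel (AMul (aD a) (aX b))
                       (AAdd (AMul (aX b) (aD a)) (@AConst F d n (if a == b then 1 else 0)))
  | arel_ee i a b : arel (AMul (aE i a) (aE i b))
                         (AAdd (AMul (aE i b) (aE i a))
                               (asum [seq ascale (c a b k) (aE i k) | k <- enum 'I_d]))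
  | arel_ee' i j a b : i != j -> arel (AMul (aE i a) (aE j b)) (AMul (aE j b) (aE i a))
  | arel_xe a i b : arel (AMul (aX a) (aE i b)) (AMul (aE i b) (aX a))
  | arel_de a i b : arel (AMul (aD a) (aE i b)) (AMul (aE i b) (aD a)).

Inductive aeq : T -> T -> Prop :=
  | aeq_refl t : aeq t t
  | aeq_sym t u : aeq t u -> aeq u t
  | aeq_trans t u v : aeq t u -> aeq u v -> aeq t v
  | aeq_add t t' u u' : aeq t t' -> aeq u u' -> aeq (AAdd t u) (AAdd t' u')
  | aeq_mul t t' u u' : aeq t t' -> aeq u u' -> aeq (AMul t u) (AMul t' u')
  | aeq_addA t u v : aeq (AAdd (AAdd t u) v) (AAdd t (AAdd u v))
  | aeq_addC t u : aeq (AAdd t u) (AAdd u t)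
  | aeq_add0 t : aeq (AAdd t (@AConst F d n 0)) t
  | aeq_addN t : aeq (AAdd t (ascale (-1) t)) (@AConst F d n 0)
  | aeq_mulA t u v : aeq (AMul (AMul t u) v) (AMul t (AMul u v))
  | aeq_mul1l t : aeq (AMul (@AConst F d n 1) t) t
  | aeq_mul1r t : aeq (AMul t (@AConst F d n 1)) t
  | aeq_mulDl t u v : aeq (AMul (AAdd t u) v) (AAdd (AMul t v) (AMul u v))
  | aeq_mulDr t u v : aeq (AMul t (AAdd u v)) (AAdd (AMul t u) (AMul t v))
  | aeq_constD k l : aeq (AAdd (@AConst F d n k) (@AConst F d n l)) (@AConst F d n (k + l))
  | aeq_constM k l : aeq (AMul (@AConst F d n k) (@AConst F d n l)) (@AConst F d n (k * l))
  | aeq_constC k t : aeq (AMul (@AConst F d n k) t) (AMul t (@AConst F d n k))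
  | aeq_rel t u : arel t u -> aeq t u.

(* X_{e_b} = sum_alpha x_{[e_b, e_alpha]} d_alpha,
   [e_b, e_alpha] = sum_gamma c b alpha gamma e_gamma *)
Definition aXop (b : 'I_d) : T :=
  asum [seq AMul (ascale (c b al ga) (aX ga)) (aD al) | al <- enum 'I_d, ga <- enum 'I_d].

(* Y_{e_b} = X_{e_b} (x) 1 + 1 (x) sum_i e_b^(i) *)
Definition aY (b : 'I_d) : T := AAdd (aXop b) (asum [seq aE i b | i <- enum 'I_n]).

(* membership in the left ideal A_n g^diag *)
Definition inI (t : T) : Prop :=
  exists s : seq (T * 'I_d), aeq t (asum [seq AMul p.1 (aY p.2) | p <- s]).

(* x with Y_a x in A_n g^diag for all a (it suffices for basis elements,
   by linearity of a |-> Y_a) *)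
Definition inN (t : T) : Prop := forall b, inI (AMul (aY b) t).

(* equality of classes in H_n(g) *)
Definition heq (t u : T) : Prop := inI (asub t u).

End Alg.
Arguments asum {F d n}. Arguments ascale {F d n}. Arguments asub {F d n}.
Arguments aX {F d n}. Arguments aD {F d n}. Arguments aE {F d n}.
Arguments aeq {F d n}. Arguments arel {F d n}. Arguments aXop {F d n}.
Arguments aY {F d n}. Arguments inI {F d n}. Arguments inN {F d n}.
Arguments heq {F d n}.

(* bar t_{1,n}: Lie algebra presented by generators and relations.          *)
Inductive lgen (n : nat) : Type :=
  | LX of 'I_n | LY of 'I_n | LT of 'I_n & 'I_n.

Inductive lterm (F : fieldType) (n : nat) : Type :=
  | LV of lgen n
  | L0
  | LAdd of lterm F n & lterm F n
  | LSc of F & lterm F n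
  | LBr of lterm F n & lterm F n.
Arguments LV {F n}. Arguments L0 {F n}. Arguments LAdd {F n}.
Arguments LSc {F n}. Arguments LBr {F n}.
Arguments LX {n}. Arguments LY {n}. Arguments LT {n}.

Section Lie.
Variables (F : fieldType) (n : nat).
Local Notation L := (lterm F n).
Definition lsum (s : seq L) : L := foldr (@LAdd F n) (@L0 F n) s.
Definition lx i : L := LV (LX i).
Definition ly i : L := LV (LY i).
Definition lt i j : L := LV (LT i j).
Definition lz : L := @L0 F n.

(* The generators t_ii (i.e. i = j) are not part of the paper's presentation;
   they are included as extra generators and killed by lrel_tii. *)
Inductive lrel : L -> L -> Prop :=
  | lrel_tii i : lrel (lt i i) lz
  | lrel_tsym i j : i != j -> lrel (lt i j) (lt j i)
  | lrel_t4T i j k : [&& i != j, i != k & j != k] ->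
      lrel (LBr (lt i j) (LAdd (lt i k) (lt j k))) lz
  | lrel_tt i j k l : uniq [:: i; j; k; l] -> lrel (LBr (lt i j) (lt k l)) lz
  | lrel_xy i j : i != j -> lrel (LBr (lx i) (ly j)) (lt i j)
  | lrel_xx i j : lrel (LBr (lx i) (lx j)) lz
  | lrel_yy i j : lrel (LBr (ly i) (ly j)) lz
  | lrel_xyii i : lrel (LBr (lx i) (ly i))
                       (LSc (-1) (lsum [seq lt i j | j <- enum 'I_n & j != i]))
  | lrel_xt i j k : [&& i != j, i != k & j != k] -> lrel (LBr (lx i) (lt j k)) lz
  | lrel_yt i j k : [&& i != j, i != k & j != k] -> lrel (LBr (ly i) (lt j k)) lz
  | lrel_xxt i j : i != j -> lrel (LBr (LAdd (lx i) (lx j)) (lt i j)) lz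
  | lrel_yyt i j : i != j -> lrel (LBr (LAdd (ly i) (ly j)) (lt i j)) lz
  | lrel_sumx : lrel (lsum [seq lx i | i <- enum 'I_n]) lz
  | lrel_sumy : lrel (lsum [seq ly i | i <- enum 'I_n]) lz.

Inductive leq : L -> L -> Prop :=
  | leq_refl u : leq u u
  | leq_sym u v : leq u v -> leq v u
  | leq_trans u v w : leq u v -> leq v w -> leq u w
  | leq_add u u' v v' : leq u u' -> leq v v' -> leq (LAdd u v) (LAdd u' v')
  | leq_sc k u u' : leq u u' -> leq (LSc k u) (LSc k u')
  | leq_br u u' v v' : leq u u' -> leq v v' -> leq (LBr u v) (LBr u' v')
  | leq_addA u v w : leq (LAdd (LAdd u v) w) (LAdd u (LAdd v w))
  | leq_addC u v : leq (LAdd u v) (LAdd v u)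
  | leq_add0 u : leq (LAdd u lz) u
  | leq_addN u : leq (LAdd u (LSc (-1) u)) lz
  | leq_sc1 u : leq (LSc 1 u) u
  | leq_scA k l u : leq (LSc k (LSc l u)) (LSc (k * l) u)
  | leq_scDl k l u : leq (LSc (k + l) u) (LAdd (LSc k u) (LSc l u))
  | leq_scDr k u v : leq (LSc k (LAdd u v)) (LAdd (LSc k u) (LSc k v))
  | leq_brDl u v w : leq (LBr (LAdd u v) w) (LAdd (LBr u w) (LBr v w))
  | leq_brDr u v w : leq (LBr u (LAdd v w)) (LAdd (LBr u v) (LBr u w))
  | leq_brZl k u v : leq (LBr (LSc k u) v) (LSc k (LBr u v))
  | leq_brZr k u v : leq (LBr u (LSc k v)) (LSc k (LBr u v))
  | leq_brxx u : leq (LBr u u) lz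
  | leq_jacobi u v w :
      leq (LAdd (LBr u (LBr v w)) (LAdd (LBr v (LBr w u)) (LBr w (LBr u v)))) lz
  | leq_rel u v : lrel u v -> leq u v.
End Lie.
Arguments lsum {F n}. Arguments lx {F n}. Arguments ly {F n}.
Arguments lt {F n}. Arguments lz {F n}. Arguments lrel {F n}. Arguments leq {F n}.

(* f : lterm -> aterm represents a Lie algebra morphism                      *)
Definition is_rho (F : fieldType) (d n : nat) (c : 'I_d -> 'I_d -> 'I_d -> F)
    (f : lterm F n -> aterm F d n) : Prop :=
  [/\
      forall u, inN c (f u),
      forall u v, leq u v -> heq c (f u) (f v),
      (forall u v, heq c (f (LAdd u v)) (AAdd (f u) (f v))) /\
      (forall k u, heq c (f (LSc k u)) (ascale k (f u))),
      forall u v, heq c (f (LBr u v)) (asub (AMul (f u) (f v)) (AMul (f v) (f u)))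
    &
      [/\ forall i, heq c (f (lx i))
                      (asum [seq AMul (aX al) (aE i al) | al <- enum 'I_d]),
          forall i, heq c (f (ly i))
                      (ascale (-1) (asum [seq AMul (aD al) (aE i al) | al <- enum 'I_d]))
        & forall i j, i != j -> heq c (f (lt i j))
                      (asum [seq AMul (aE i al) (aE j al) | al <- enum 'I_d])]].

(* Each of these images is the image of the
   invariant tensor [t_g] under a g-equivariant map, hence commutes with every
   [Y_b]; so all values of the map lie in the idealizer of the left ideal
   [A_n g^diag], on which the commutator descends to H_n(g).  Most defining
   relations of bar t_{1,n} then hold exactly in A_n, by the commutation rules
   of D(g) (x) U(g)^n and the antisymmetry of the structure constants.  The
   three remaining ones, [sum x_i = 0], [sum y_i = 0] and
   [[x_i, y_i] = - sum_(j != i) t_ij], hold modulo [A_n g^diag]: writing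
   [sum_i e_a^(i) = Y_a - X_a], what is left cancels by the antisymmetry of
   the structure constants (using [2 != 0]).  Uniqueness is induction
   on terms, the bracket being well defined on the idealizer. *)
From Pilot Require Import Defs.
From HB Require Import structures.
From mathcomp Require Import all_boot all_order all_algebra.
From mathcomp Require Import boolp.
Set Implicit Arguments.
Unset Strict Implicit.
Unset Printing Implicit Defensive.
Import Order.TTheory GRing.Theory Num.Theory.
Local Open Scope ring_scope.

Section LieBracket.
Variable R : pzRingType.
Implicit Types x y z : R.

Definition lie x y := x * y - y * x.

Lemma lieDl x y z : lie (x + y) z = lie x z + lie y z.
Proof. by rewrite /lie mulrDl mulrDr opprD addrACA. Qed.
Lemma lieDr x y z : lie x (y + z) = lie x y + lie x z.
Proof. by rewrite /lie mulrDl mulrDr opprD addrACA. Qed.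
Lemma lieNl x y : lie (- x) y = - lie x y.
Proof. by rewrite /lie mulNr mulrN opprB opprK addrC. Qed.
Lemma lieNr x y : lie x (- y) = - lie x y.
Proof. by rewrite /lie mulNr mulrN opprB opprK addrC. Qed.
Lemma lie0l y : lie 0 y = 0. Proof. by rewrite /lie mul0r mulr0 subrr. Qed.
Lemma lie0r y : lie y 0 = 0. Proof. by rewrite /lie mul0r mulr0 subrr. Qed.
Lemma liexx x : lie x x = 0. Proof. exact: subrr. Qed.
Lemma lieC x y : lie y x = - lie x y. Proof. by rewrite /lie opprB. Qed.

Lemma lie_suml I (r : seq I) P (G : I -> R) y :
  lie (\sum_(i <- r | P i) G i) y = \sum_(i <- r | P i) lie (G i) y.
Proof. by elim/big_rec2: _ => [|i a b _ <-]; rewrite ?lie0l ?lieDl. Qed.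
Lemma lie_sumr I (r : seq I) P (G : I -> R) y :
  lie y (\sum_(i <- r | P i) G i) = \sum_(i <- r | P i) lie y (G i).
Proof. by elim/big_rec2: _ => [|i a b _ <-]; rewrite ?lie0r ?lieDr. Qed.

Lemma lieMl x y z : lie (x * y) z = x * lie y z + lie x z * y.
Proof.
rewrite /lie mulrBr mulrBl !mulrA addrA; congr (_ + _).
by rewrite -addrA addNr addr0.
Qed.
Lemma lieMr x y z : lie x (y * z) = lie x y * z + y * lie x z.
Proof.
rewrite /lie mulrBr mulrBl !mulrA addrA; congr (_ + _).
by rewrite -addrA addNr addr0.
Qed.

Lemma lie_eq0 x y : (lie x y = 0) <-> (x * y = y * x).
Proof.
rewrite /lie; split=> [/eqP|->]; last exact: subrr.
by rewrite subr_eq0 => /eqP.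
Qed.

Lemma lie_jacobi x y z : lie x (lie y z) + lie y (lie z x) + lie z (lie x y) = 0.
Proof.
have lie_der u v w : lie u (lie v w) = lie (lie u v) w + lie v (lie u w).
  rewrite [lie v w]/lie lieDr lieNr !lieMr /lie opprD.
  by rewrite [- (_ * v) + _]addrC addrACA.
by rewrite lie_der [lie z x]lieC lieNr [lie z (lie x y)]lieC addrK subrr.
Qed.

Lemma lie_eq0Ml x y z : lie x z = 0 -> lie y z = 0 -> lie (x * y) z = 0.
Proof. by move=> h1 h2; rewrite lieMl h1 h2 mulr0 mul0r addr0. Qed.
Lemma lie_eq0Mr x y z : lie z x = 0 -> lie z y = 0 -> lie z (x * y) = 0.
Proof. by move=> h1 h2; rewrite lieMr h1 h2 mulr0 mul0r addr0. Qed.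
Lemma lie_eq0_suml I (r : seq I) (P : pred I) (G : I -> R) z :
  (forall i, lie (G i) z = 0) -> lie (\sum_(i <- r | P i) G i) z = 0.
Proof. by move=> h; rewrite lie_suml big1. Qed.
Lemma lie_eq0_sumr I (r : seq I) (P : pred I) (G : I -> R) z :
  (forall i, lie z (G i) = 0) -> lie z (\sum_(i <- r | P i) G i) = 0.
Proof. by move=> h; rewrite lie_sumr big1. Qed.
Lemma lie_eq0Nl x z : lie x z = 0 -> lie (- x) z = 0.
Proof. by rewrite lieNl => ->; rewrite oppr0. Qed.
Lemma lie_eq0Nr x z : lie z x = 0 -> lie z (- x) = 0.
Proof. by rewrite lieNr => ->; rewrite oppr0. Qed.

End LieBracket.

Lemma sum_delta_mull (R : pzRingType) (I : finType) (G : I -> R) a :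
  \sum_k (k == a)%:R * G k = G a.
Proof. by rewrite (bigD1 a) //= eqxx mul1r big1 ?addr0 // => k /negbTE ->; rewrite mul0r. Qed.

Section AntisymmetricSums.
Variables (K : fieldType) (V : lmodType K) (I : finType).
Variables (w : I -> I -> K) (G : I -> I -> V).
Hypothesis w_antisym : forall a k, w k a = - w a k.

Lemma sumZ_antisym_transpose :
  \sum_a \sum_k w a k *: G k a + \sum_a \sum_k w a k *: G a k = 0.
Proof.
rewrite exchange_big /=.
rewrite (eq_bigr (fun a => - \sum_k w a k *: G a k)) ?sumrN ?addNr // => a _.
by rewrite -sumrN; apply: eq_bigr => k _; rewrite w_antisym scaleNr.
Qed.

Lemma sumZ_antisym_sym (char2 : (2 : K) != 0) :
  (forall a k, G k a = G a k) -> \sum_a \sum_k w a k *: G a k = 0.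
Proof.
move=> G_sym; set S := \sum_a _.
have SS : S + S = 0.
  rewrite -[RHS]sumZ_antisym_transpose; congr (_ + _).
  by apply: eq_bigr => a _; apply: eq_bigr => k _; rewrite G_sym.
by rewrite -[S]scale1r -(mulVf char2) -scalerA scaler_nat (mulr2n S) SS scaler0.
Qed.

End AntisymmetricSums.

Section LeftIdeal.
Variables (R : pzRingType) (I : Type) (y : I -> R).
Implicit Types a x z : R.

Definition in_lideal x := exists s : seq (R * I), x = \sum_(p <- s) p.1 * y p.2.
Definition in_idealizer z := forall b, in_lideal (y b * z).
Definition lcong x z := in_lideal (x - z).

Lemma in_lideal0 : in_lideal 0. Proof. by exists [::]; rewrite big_nil. Qed.
Lemma in_lidealD x z : in_lideal x -> in_lideal z -> in_lideal (x + z).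
Proof. by case=> s -> [s' ->]; exists (s ++ s'); rewrite big_cat. Qed.
Lemma in_lidealMl a x : in_lideal x -> in_lideal (a * x).
Proof.
case=> s ->; exists [seq (a * p.1, p.2) | p <- s].
by rewrite big_map mulr_sumr; apply: eq_bigr => p _; rewrite mulrA.
Qed.
Lemma in_lidealN x : in_lideal x -> in_lideal (- x).
Proof. by rewrite -mulN1r; apply: in_lidealMl. Qed.
Lemma in_lidealB x z : in_lideal x -> in_lideal z -> in_lideal (x - z).
Proof. by move=> hx hz; apply/in_lidealD/in_lidealN. Qed.
Lemma in_lideal_gen a b : in_lideal (a * y b).
Proof. by exists [:: (a, b)]; rewrite big_seq1. Qed.
Lemma in_lideal_sum J (r : seq J) (P : pred J) (G : J -> R) :
  (forall j, P j -> in_lideal (G j)) -> in_lideal (\sum_(j <- r | P j) G j).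
Proof. by move=> h; elim/big_rec: _ => [|j x Pj hx]; [exact: in_lideal0|apply/in_lidealD/hx/h]. Qed.

Lemma in_lidealMr x z : in_lideal x -> in_idealizer z -> in_lideal (x * z).
Proof.
case=> s -> hz; rewrite mulr_suml; apply: in_lideal_sum => p _.
by rewrite -mulrA; apply: in_lidealMl.
Qed.

Lemma in_idealizer0 : in_idealizer 0.
Proof. by move=> b; rewrite mulr0; exact: in_lideal0. Qed.
Lemma in_idealizerD x z : in_idealizer x -> in_idealizer z -> in_idealizer (x + z).
Proof. by move=> hx hz b; rewrite mulrDr; apply: in_lidealD. Qed.
Lemma in_idealizer_lie x z : in_idealizer x -> in_idealizer z -> in_idealizer (lie x z).
Proof.
move=> hx hz b; rewrite /lie mulrBr.
by apply: in_lidealB; rewrite mulrA; apply: in_lidealMr => //; apply: hx.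
Qed.
Lemma in_idealizer_centralizer z : (forall b, lie (y b) z = 0) -> in_idealizer z.
Proof. by move=> h b; rewrite (proj1 (lie_eq0 _ _) (h b)); apply: in_lideal_gen. Qed.

Lemma lcong_refl x : lcong x x.
Proof. by rewrite /lcong subrr; apply: in_lideal0. Qed.
Lemma lcong_eq x z : x = z -> lcong x z.
Proof. by move=> ->; apply: lcong_refl. Qed.
Lemma lcong_sym x z : lcong x z -> lcong z x.
Proof. by move=> /in_lidealN; rewrite opprB. Qed.
Lemma lcong_trans x1 x2 x3 : lcong x1 x2 -> lcong x2 x3 -> lcong x1 x3.
Proof.
rewrite /lcong; have -> : x1 - x3 = (x1 - x2) + (x2 - x3) by rewrite addrA subrK.
exact: in_lidealD.
Qed.
Lemma lcong_via x1 x2 z1 z2 : lcong x1 z1 -> lcong x2 z2 -> lcong z1 z2 -> lcong x1 x2.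
Proof. by move=> h1 h2 h; apply: lcong_trans h1 (lcong_trans h (lcong_sym h2)). Qed.
Lemma lcongD x1 x2 z1 z2 : lcong x1 x2 -> lcong z1 z2 -> lcong (x1 + z1) (x2 + z2).
Proof. by rewrite /lcong opprD addrACA; apply: in_lidealD. Qed.
Lemma lcong0 x : lcong x 0 <-> in_lideal x.
Proof. by rewrite /lcong subr0. Qed.

Lemma lcong_lie x1 x2 z1 z2 : lcong x1 x2 -> lcong z1 z2 ->
  in_idealizer x2 -> in_idealizer z1 -> lcong (lie x1 z1) (lie x2 z2).
Proof.
move=> hx hz Nx2 Nz1; rewrite /lcong.
have -> : lie x1 z1 - lie x2 z2 = lie (x1 - x2) z1 + lie x2 (z1 - z2).
  by rewrite lieDl lieNl lieDr lieNr addrA subrK.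
rewrite /lie; apply: in_lidealD; apply: in_lidealB.
- exact: in_lidealMr.
- exact: in_lidealMl.
- exact: in_lidealMl.
- exact: in_lidealMr.
Qed.

End LeftIdeal.

(* Elements of A_n are the [aeq]-classes of terms, represented as predicates on
   terms; choice on the representative gives the operations. *)
Section QuotientAlgebra.
Variables (F : fieldType) (d n : nat) (c : 'I_d -> 'I_d -> 'I_d -> F).
Local Notation T := (aterm F d n).
Local Notation aeqc := (@aeq F d n c).

Record An := MkAn { an_class : T -> Prop ; an_classP : exists t, an_class = aeqc t }.

Lemma An_inj (q1 q2 : An) : an_class q1 = an_class q2 -> q1 = q2.
Proof.
case: q1 q2 => [c1 p1] [c2 p2] /= E; subst c2.
by rewrite (Prop_irrelevance p1 p2).
Qed.

Definition cl (t : T) : An := @MkAn (aeqc t) (ex_intro _ t erefl).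

Lemma cl_eq t u : aeqc t u -> cl t = cl u.
Proof.
move=> h; apply: An_inj => /=; apply: funext => x; apply: propext.
by split=> hx; [apply: aeq_trans (aeq_sym h) hx|apply: aeq_trans h hx].
Qed.

Lemma eq_cl t u : cl t = cl u -> aeqc t u.
Proof. by move=> /(congr1 an_class) /= ->; apply: aeq_refl. Qed.

Definition repr_cl (q : An) : T := proj1_sig (cid (an_classP q)).

Lemma repr_clK q : cl (repr_cl q) = q.
Proof. by rewrite /repr_cl; case: (cid _) => t /= E; apply: An_inj => /=; rewrite E. Qed.

Lemma cl_repr t : aeqc (repr_cl (cl t)) t.
Proof. by apply: eq_cl; rewrite repr_clK. Qed.

Lemma An_ind (P : An -> Prop) : (forall t, P (cl t)) -> forall q, P q.
Proof. by move=> h q; rewrite -(repr_clK q). Qed.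

HB.instance Definition _ := gen_eqMixin An.
HB.instance Definition _ := gen_choiceMixin An.

Definition An_zero : An := cl (AConst 0).
Definition An_one : An := cl (AConst 1).
Definition An_add (a b : An) := locked cl (AAdd (repr_cl a) (repr_cl b)).
Definition An_mul (a b : An) := locked cl (AMul (repr_cl a) (repr_cl b)).
Definition An_opp (a : An) := locked cl (ascale (-1) (repr_cl a)).
Definition An_scale (k : F) (a : An) := locked cl (ascale k (repr_cl a)).

Lemma An_addE t u : An_add (cl t) (cl u) = cl (AAdd t u).
Proof. by rewrite /An_add -lock; apply/cl_eq/aeq_add; apply: cl_repr. Qed.
Lemma An_mulE t u : An_mul (cl t) (cl u) = cl (AMul t u).
Proof. by rewrite /An_mul -lock; apply/cl_eq/aeq_mul; apply: cl_repr. Qed.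
Lemma An_oppE t : An_opp (cl t) = cl (ascale (-1) t).
Proof. by rewrite /An_opp -lock; apply/cl_eq/aeq_mul; [apply: aeq_refl|apply: cl_repr]. Qed.
Lemma An_scaleE k t : An_scale k (cl t) = cl (ascale k t).
Proof. by rewrite /An_scale -lock; apply/cl_eq/aeq_mul; [apply: aeq_refl|apply: cl_repr]. Qed.

Local Ltac An_elim := repeat (let q := fresh "q" in elim/An_ind => q);
  rewrite /An_zero /An_one ?An_addE ?An_mulE ?An_oppE ?An_scaleE
    ?An_addE ?An_mulE ?An_oppE ?An_scaleE; apply: cl_eq.

Lemma An_addA : associative An_add.
Proof. by An_elim; apply/aeq_sym/aeq_addA. Qed.
Lemma An_addC : commutative An_add.
Proof. by An_elim; apply: aeq_addC. Qed.
Lemma An_add0r : left_id An_zero An_add.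
Proof. by An_elim; apply: aeq_trans (aeq_addC _ _ _) (aeq_add0 _ _). Qed.
Lemma An_addNr : left_inverse An_zero An_opp An_add.
Proof. by An_elim; apply: aeq_trans (aeq_addC _ _ _) (aeq_addN _ _). Qed.
Lemma An_mulA : associative An_mul.
Proof. by An_elim; apply/aeq_sym/aeq_mulA. Qed.
Lemma An_mul1r : left_id An_one An_mul.
Proof. by An_elim; apply: aeq_mul1l. Qed.
Lemma An_mulr1 : right_id An_one An_mul.
Proof. by An_elim; apply: aeq_mul1r. Qed.
Lemma An_mulDl : left_distributive An_mul An_add.
Proof. by An_elim; apply: aeq_mulDl. Qed.
Lemma An_mulDr : right_distributive An_mul An_add.
Proof. by An_elim; apply: aeq_mulDr. Qed.

HB.instance Definition _ := GRing.isPzRing.Build An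
  An_addA An_addC An_add0r An_addNr An_mulA An_mul1r An_mulr1 An_mulDl An_mulDr.

Lemma clD t u : cl (AAdd t u) = cl t + cl u. Proof. by rewrite -An_addE. Qed.
Lemma clM t u : cl (AMul t u) = cl t * cl u. Proof. by rewrite -An_mulE. Qed.

Lemma An_scaleA k l v : An_scale k (An_scale l v) = An_scale (k * l) v.
Proof.
move: v; An_elim; apply: aeq_trans (aeq_sym (aeq_mulA _ _ _ _)) _.
by apply: aeq_mul; [apply: aeq_constM|apply: aeq_refl].
Qed.
Lemma An_scale1 : left_id 1 An_scale.
Proof. by An_elim; apply: aeq_mul1l. Qed.
Lemma An_scaleDr : right_distributive An_scale +%R.
Proof.
by move=> k; elim/An_ind=> t; elim/An_ind=> u; rewrite -clD !An_scaleE -clD; apply/cl_eq/aeq_mulDr.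
Qed.
Lemma An_scaleDl v : {morph An_scale^~ v : a b / a + b}.
Proof.
move=> a b; elim/An_ind: v => t; rewrite !An_scaleE -clD.
apply/cl_eq/(aeq_trans _ (aeq_mulDl _ _ _ _)).
by apply: aeq_mul; [apply/aeq_sym/aeq_constD|apply: aeq_refl].
Qed.

HB.instance Definition _ :=
  GRing.Zmodule_isLmodule.Build F An An_scaleA An_scale1 An_scaleDr An_scaleDl.

Lemma clZ k t : cl (ascale k t) = k *: cl t. Proof. by rewrite -An_scaleE. Qed.
Lemma clB t u : cl (asub t u) = cl t - cl u.
Proof. by rewrite /asub clD clZ scaleN1r. Qed.
Lemma clC k : cl (AConst k) = k *: (1 : An).
Proof. by rewrite -[1]/(cl (AConst 1)) -clZ -{1}(mulr1 k); apply/cl_eq/aeq_sym/aeq_constM. Qed.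
Lemma cl_sum (s : seq T) : cl (asum s) = \sum_(t <- s) cl t.
Proof. by elim: s => [|t s IH]; rewrite ?big_nil ?big_cons -?IH ?clD. Qed.

Lemma An_scalerAl k (u v : An) : k *: (u * v) = (k *: u) * v.
Proof.
elim/An_ind: u => u; elim/An_ind: v => v.
by rewrite -clM -!clZ -clM; apply/cl_eq/aeq_sym/aeq_mulA.
Qed.
Lemma An_scalerAr k (u v : An) : k *: (u * v) = u * (k *: v).
Proof.
elim/An_ind: u => u; elim/An_ind: v => v.
rewrite -clM -!clZ -clM; apply: cl_eq; rewrite /ascale.
apply: aeq_trans (aeq_constC _ _ _) _; apply: aeq_trans (aeq_mulA _ _ _ _) _.
by apply: aeq_mul; [apply: aeq_refl|apply/aeq_sym/aeq_constC].
Qed.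

Lemma lieZl k (u v : An) : lie (k *: u) v = k *: lie u v.
Proof. by rewrite /lie scalerBr -An_scalerAl -An_scalerAr. Qed.
Lemma lieZr k (u v : An) : lie u (k *: v) = k *: lie u v.
Proof. by rewrite /lie scalerBr -An_scalerAl -An_scalerAr. Qed.

Definition xA a : An := cl (aX a).
Definition dA a : An := cl (aD a).
Definition eA i a : An := cl (aE i a).

Lemma cl_rel t u : arel c t u -> cl t = cl u.
Proof. by move=> h; apply/cl_eq/aeq_rel. Qed.

Lemma lie_commuting_rel t u : arel c (AMul t u) (AMul u t) -> lie (cl t) (cl u) = 0.
Proof. by move=> h; apply/lie_eq0; rewrite -!clM; apply: cl_rel. Qed.

Lemma lie_xAxA a b : lie (xA a) (xA b) = 0.
Proof. exact/lie_commuting_rel/arel_xx. Qed.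
Lemma lie_dAdA a b : lie (dA a) (dA b) = 0.
Proof. exact/lie_commuting_rel/arel_dd. Qed.
Lemma lie_xAeA a i b : lie (xA a) (eA i b) = 0.
Proof. exact/lie_commuting_rel/arel_xe. Qed.
Lemma lie_dAeA a i b : lie (dA a) (eA i b) = 0.
Proof. exact/lie_commuting_rel/arel_de. Qed.
Lemma lie_eAeA_neq i j a b : i != j -> lie (eA i a) (eA j b) = 0.
Proof. by move=> ij; apply/lie_commuting_rel/arel_ee'. Qed.
Lemma lie_eAxA a i b : lie (eA i b) (xA a) = 0.
Proof. by rewrite lieC lie_xAeA oppr0. Qed.
Lemma lie_eAdA a i b : lie (eA i b) (dA a) = 0.
Proof. by rewrite lieC lie_dAeA oppr0. Qed.

Lemma lie_dAxA a b : lie (dA a) (xA b) = (a == b)%:R.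
Proof.
rewrite /lie -!clM (cl_rel (arel_dx _ _ _ _)) clD addrC addKr.
by case: (a == b); rewrite clC ?scale1r ?scale0r.
Qed.
Lemma lie_xAdA a b : lie (xA a) (dA b) = - (b == a)%:R.
Proof. by rewrite lieC lie_dAxA. Qed.
Lemma lie_eAeA i a b : lie (eA i a) (eA i b) = \sum_k c a b k *: eA i k.
Proof.
rewrite /lie -!clM (cl_rel (arel_ee _ _ _ _)) clD addrC addKr cl_sum big_map.
by rewrite big_enum; apply: eq_bigr => k _; rewrite clZ.
Qed.

End QuotientAlgebra.

(* Term-level rho: t_ii, which the presentation of bar t_{1,n} kills, goes to 0. *)
Fixpoint rho_term (F : fieldType) (d n : nat) (u : lterm F n) : aterm F d n :=
  match u with
  | LV (LX i) => asum [seq AMul (aX al) (aE i al) | al <- enum 'I_d]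
  | LV (LY i) => ascale (-1) (asum [seq AMul (aD al) (aE i al) | al <- enum 'I_d])
  | LV (LT i j) => if i == j then AConst 0
                   else asum [seq AMul (aE i al) (aE j al) | al <- enum 'I_d]
  | L0 => AConst 0
  | LAdd u v => AAdd (rho_term d u) (rho_term d v)
  | LSc k u => ascale k (rho_term d u)
  | LBr u v => asub (AMul (rho_term d u) (rho_term d v)) (AMul (rho_term d v) (rho_term d u))
  end.

Section Representation.
Variables (F : fieldType) (d n : nat) (c : 'I_d -> 'I_d -> 'I_d -> F).
Local Notation An := (@An F d n c).
Local Notation cl := (@cl F d n c).
Local Notation xA := (@xA F d n c).
Local Notation dA := (@dA F d n c).
Local Notation eA := (@eA F d n c).

Definition Xop b : An := \sum_al \sum_ga (c b al ga *: xA ga) * dA al.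
Definition Yop b : An := Xop b + \sum_i eA i b.

Lemma cl_aXop b : cl (aXop c b) = Xop b.
Proof.
rewrite /aXop cl_sum big_allpairs_dep /Xop big_enum /=; apply: eq_bigr => al _.
by rewrite big_enum; apply: eq_bigr => ga _; rewrite clM clZ.
Qed.
Lemma cl_aY b : cl (aY c b) = Yop b.
Proof. by rewrite /aY clD cl_aXop cl_sum big_map big_enum. Qed.

Lemma inIE t : inI c t <-> in_lideal Yop (cl t).
Proof.
split=> [[s /cl_eq ->]|[s E]].
  exists [seq (cl p.1, p.2) | p <- s].
  by rewrite cl_sum !big_map; apply: eq_bigr => p _; rewrite clM cl_aY.
exists [seq (repr_cl p.1, p.2) | p <- s]; apply: eq_cl.
by rewrite E cl_sum !big_map; apply: eq_bigr => p _; rewrite clM cl_aY repr_clK.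
Qed.

Lemma inNE t : inN c t <-> in_idealizer Yop (cl t).
Proof. by split=> h b; [move/inIE: (h b); rewrite clM cl_aY|apply/inIE; rewrite clM cl_aY]. Qed.

Lemma heqE t u : heq c t u <-> lcong Yop (cl t) (cl u).
Proof. by rewrite /heq inIE clB. Qed.

Lemma in_lidealZ k x : in_lideal Yop x -> in_lideal Yop (k *: x).
Proof. by move=> h; rewrite -[x]mul1r An_scalerAl; apply: in_lidealMl. Qed.
Lemma in_idealizerZ k x : in_idealizer Yop x -> in_idealizer Yop (k *: x).
Proof. by move=> hx b; rewrite -An_scalerAr; apply: in_lidealZ. Qed.
Lemma lcongZ k x z : lcong Yop x z -> lcong Yop (k *: x) (k *: z).
Proof. by rewrite /lcong -scalerBr; apply: in_lidealZ. Qed.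

Definition rhoA (u : lterm F n) : An := cl (rho_term d u).
Definition xbar i : An := \sum_a xA a * eA i a.
Definition ybar i : An := - \sum_a dA a * eA i a.
Definition tbar i j : An := \sum_a eA i a * eA j a.

Lemma rhoAD u v : rhoA (LAdd u v) = rhoA u + rhoA v. Proof. exact: clD. Qed.
Lemma rhoAZ k u : rhoA (LSc k u) = k *: rhoA u. Proof. exact: clZ. Qed.
Lemma rhoA_lie u v : rhoA (LBr u v) = lie (rhoA u) (rhoA v).
Proof. by rewrite /rhoA /= clB !clM. Qed.
Lemma rhoA_sum (s : seq (lterm F n)) : rhoA (lsum s) = \sum_(u <- s) rhoA u.
Proof. by elim: s => [|u s IH]; rewrite ?big_nil ?big_cons -?IH ?rhoAD. Qed.

Lemma cl_sum_prod (G H : 'I_d -> aterm F d n) :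
  cl (asum [seq AMul (G al) (H al) | al <- enum 'I_d]) = \sum_a cl (G a) * cl (H a).
Proof. by rewrite cl_sum big_map big_enum; apply: eq_bigr => a _; rewrite clM. Qed.

Lemma rhoA_x i : rhoA (lx i) = xbar i. Proof. exact: cl_sum_prod. Qed.
Lemma rhoA_y i : rhoA (ly i) = ybar i.
Proof. by rewrite /rhoA /= clZ scaleN1r cl_sum_prod. Qed.
Lemma rhoA_t i j : i != j -> rhoA (lt i j) = tbar i j.
Proof. by move=> /negbTE ij; rewrite /rhoA /= ij cl_sum_prod. Qed.
Lemma rhoA_tii i : rhoA (lt i i) = 0. Proof. by rewrite /rhoA /= eqxx. Qed.

End Representation.

Section Invariance.
Variables (F : fieldType) (d n : nat) (c : 'I_d -> 'I_d -> 'I_d -> F).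
Hypothesis hc : quadratic_lie c.
Local Notation An := (@An F d n c).
Local Notation xA := (@xA F d n c).
Local Notation dA := (@dA F d n c).
Local Notation eA := (@eA F d n c).
Local Notation Xop := (@Xop F d n c).
Local Notation Yop := (@Yop F d n c).
Local Notation xbar := (@xbar F d n c).
Local Notation ybar := (@ybar F d n c).
Local Notation tbar := (@tbar F d n c).

Lemma c_antisym a b k : c a b k = - c b a k. Proof. by case: hc. Qed.
Lemma c_invariant a b e : c a b e = c b e a. Proof. by case: hc. Qed.
Lemma c_antisym23 a b k : c a k b = - c a b k.
Proof. by rewrite c_invariant c_antisym -c_invariant. Qed.
Lemma c_antisym13 a b k : c k b a = - c a b k.
Proof. by rewrite (c_invariant a) (c_antisym b) opprK. Qed.

Lemma lie_Xop_eA b i a : lie (Xop b) (eA i a) = 0.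
Proof.
apply: lie_eq0_suml => al; apply: lie_eq0_suml => ga.
by apply: lie_eq0Ml; rewrite ?lieZl ?lie_xAeA ?scaler0 ?lie_dAeA.
Qed.

Lemma lie_Yop_eA b i a : lie (Yop b) (eA i a) = \sum_k c b a k *: eA i k.
Proof.
rewrite lieDl lie_Xop_eA add0r lie_suml (bigD1 i) //= lie_eAeA.
by rewrite [X in _ + X]big1 ?addr0 // => l; apply: lie_eAeA_neq.
Qed.

Lemma lie_Yop_xA b a : lie (Yop b) (xA a) = \sum_g c b a g *: xA g.
Proof.
rewrite lieDl (lie_eq0_suml _ _ (fun i => lie_eAxA c a i b)) addr0.
rewrite lie_suml (bigD1 a) //= [X in _ + X]big1 ?addr0 => [|al al_a].
  rewrite lie_suml; apply: eq_bigr => g _.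
  by rewrite lieMl lie_dAxA lieZl lie_xAxA scaler0 mul0r addr0 eqxx mulr1.
apply: lie_eq0_suml => g; rewrite lieMl lie_dAxA lieZl lie_xAxA.
by rewrite scaler0 mul0r addr0 (negbTE al_a) mulr0.
Qed.

Lemma lie_Yop_dA b a : lie (Yop b) (dA a) = \sum_k c b a k *: dA k.
Proof.
rewrite lieDl (lie_eq0_suml _ _ (fun i => lie_eAdA c a i b)) addr0.
rewrite lie_suml; apply: eq_bigr => al _.
rewrite lie_suml (bigD1 a) //= [X in _ + X]big1 ?addr0 => [|g g_a].
  rewrite lieMl lie_dAdA lieZl lie_xAdA mulr0 add0r eqxx scalerN mulNr.
  by rewrite -An_scalerAl mul1r -scaleNr -c_antisym23.
by rewrite lieMl lie_dAdA lieZl lie_xAdA mulr0 add0r eq_sym (negbTE g_a) oppr0 scaler0 mul0r.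
Qed.

(* [u] and [v] transform like the basis [e_a] under [Y_b], so [sum_a u_a v_a]
   is the image of the invariant tensor [t_g]. *)
Lemma lie_Yop_invariant b (u v : 'I_d -> An) :
  (forall a, lie (Yop b) (u a) = \sum_k c b a k *: u k) ->
  (forall a, lie (Yop b) (v a) = \sum_k c b a k *: v k) ->
  lie (Yop b) (\sum_a u a * v a) = 0.
Proof.
move=> hu hv; rewrite -[RHS](sumZ_antisym_transpose (w := c b) (fun x y => u x * v y));
  last by move=> a k; apply: c_antisym23.
rewrite -big_split lie_sumr; apply: eq_bigr => a _ /=.
rewrite lieMr hu hv mulr_suml mulr_sumr; congr (_ + _); apply: eq_bigr => k _.
  by rewrite -An_scalerAl.
by rewrite -An_scalerAr.
Qed.

Lemma lie_Yop_xbar b i : lie (Yop b) (xbar i) = 0.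
Proof. by apply: lie_Yop_invariant => a; [apply: lie_Yop_xA|apply: lie_Yop_eA]. Qed.
Lemma lie_Yop_ybar b i : lie (Yop b) (ybar i) = 0.
Proof.
by rewrite lieNr (lie_Yop_invariant (u := dA)) ?oppr0 // => a;
  [apply: lie_Yop_dA|apply: lie_Yop_eA].
Qed.
Lemma lie_Yop_tbar b i j : lie (Yop b) (tbar i j) = 0.
Proof. by apply: lie_Yop_invariant => a; apply: lie_Yop_eA. Qed.

End Invariance.

Section ExactRelations.
Variables (F : fieldType) (d n : nat) (c : 'I_d -> 'I_d -> 'I_d -> F).
Hypothesis hc : quadratic_lie c.
Local Notation An := (@An F d n c).
Local Notation xA := (@xA F d n c).
Local Notation dA := (@dA F d n c).
Local Notation eA := (@eA F d n c).
Local Notation xbar := (@xbar F d n c).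
Local Notation ybar := (@ybar F d n c).
Local Notation tbar := (@tbar F d n c).

Lemma tbarC i j : i != j -> tbar i j = tbar j i.
Proof. by move=> ij; apply: eq_bigr => a _; apply/lie_eq0/lie_eAeA_neq. Qed.

Lemma lie_tbar_disjoint i j k l : uniq [:: i; j; k; l] -> lie (tbar i j) (tbar k l) = 0.
Proof.
rewrite /= !inE !negb_or => /and4P[/and3P[ik il jk] /andP[jk' jl] kl _].
apply: lie_eq0_suml => a; apply: lie_eq0_sumr => b.
by apply: lie_eq0Ml; apply: lie_eq0Mr; apply: lie_eAeA_neq.
Qed.

Lemma lie_xbar_tbar i j k : [&& i != j, i != k & j != k] -> lie (xbar i) (tbar j k) = 0.
Proof.
case/and3P => ij ik jk; apply: lie_eq0_suml => a.
by apply: lie_eq0Ml; apply: lie_eq0_sumr => b; apply: lie_eq0Mr;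
  rewrite ?lie_xAeA ?lie_eAeA_neq.
Qed.
Lemma lie_ybar_tbar i j k : [&& i != j, i != k & j != k] -> lie (ybar i) (tbar j k) = 0.
Proof.
case/and3P => ij ik jk; apply/lie_eq0Nl/lie_eq0_suml => a.
by apply: lie_eq0Ml; apply: lie_eq0_sumr => b; apply: lie_eq0Mr;
  rewrite ?lie_dAeA ?lie_eAeA_neq.
Qed.

Lemma lie_xbar_xbar i j : lie (xbar i) (xbar j) = 0.
Proof.
have [<-|ij] := eqVneq i j; first exact: liexx.
apply: lie_eq0_suml => a; apply: lie_eq0Ml; apply: lie_eq0_sumr => b;
  by apply: lie_eq0Mr; rewrite ?lie_xAxA ?lie_xAeA ?lie_eAxA ?lie_eAeA_neq.
Qed.
Lemma lie_ybar_ybar i j : lie (ybar i) (ybar j) = 0.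
Proof.
have [<-|ij] := eqVneq i j; first exact: liexx.
apply/lie_eq0Nl/lie_eq0Nr/lie_eq0_suml => a; apply: lie_eq0Ml; apply: lie_eq0_sumr => b;
  by apply: lie_eq0Mr; rewrite ?lie_dAdA ?lie_dAeA ?lie_eAdA ?lie_eAeA_neq.
Qed.

Lemma lie_xbar_ybar i j : i != j -> lie (xbar i) (ybar j) = tbar i j.
Proof.
move=> ij; rewrite /ybar lieNr lie_suml -sumrN; apply: eq_bigr => a _.
rewrite lie_sumr (eq_bigr (fun b => - ((b == a)%:R * (eA j b * eA i a)))) => [|b _].
  rewrite sumrN opprK sum_delta_mull.
  by apply/lie_eq0/lie_eAeA_neq; rewrite eq_sym.
rewrite lieMl (lie_eq0Mr (lie_eAdA _ _ _ _) (lie_eAeA_neq _ _ _ ij)) mulr0 add0r.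
by rewrite lieMr lie_xAeA mulr0 addr0 lie_xAdA !mulNr -mulrA.
Qed.

Lemma lie_tbar_4T i j k : [&& i != j, i != k & j != k] ->
  lie (tbar i j) (tbar i k + tbar j k) = 0.
Proof.
case/and3P => ij ik jk.
have ji : j != i by rewrite eq_sym.
rewrite lieDr /tbar !lie_suml -big_split /=.
rewrite (eq_bigr (fun a => \sum_b (\sum_m c a b m *: (eA i m * eA j a * eA k b)
          + \sum_m c a b m *: (eA i a * eA j m * eA k b)))) => [|a _]; last first.
  rewrite !lie_sumr -big_split; apply: eq_bigr => b _; congr (_ + _).
    rewrite lieMl (lie_eq0Mr (lie_eAeA_neq _ _ _ ji) (lie_eAeA_neq _ _ _ jk)) mulr0 add0r.
    rewrite lieMr lie_eAeA (lie_eAeA_neq _ _ _ ik) mulr0 addr0 !mulr_suml.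
    apply: eq_bigr => m _; rewrite -!An_scalerAl -!mulrA; congr (_ *: _); congr (_ * _).
    by apply/lie_eq0/lie_eAeA_neq; rewrite eq_sym.
  rewrite lieMl (lie_eq0Mr (lie_eAeA_neq _ _ _ ij) (lie_eAeA_neq _ _ _ ik)) mul0r addr0.
  rewrite lieMr lie_eAeA (lie_eAeA_neq _ _ _ jk) mulr0 addr0 mulr_suml mulr_sumr.
  by apply: eq_bigr => m _; rewrite -An_scalerAl -An_scalerAr mulrA.
rewrite exchange_big /= big1 // => b _; rewrite big_split /=.
apply: (sumZ_antisym_transpose (w := fun a m => c a b m) (fun x y => eA i x * eA j y * eA k b)).
by move=> a m; apply: c_antisym13.
Qed.

(* Covers [x_i + x_j] and [y_i + y_j]: [sum_a e_a^(i) e_a^(j)] is invariant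
   under the diagonal action [e_a^(i) + e_a^(j)]. *)
Lemma lie_sum_pair_tbar (G : 'I_d -> An) i j : i != j ->
  (forall a l b, lie (G a) (eA l b) = 0) ->
  lie (\sum_a G a * eA i a + \sum_a G a * eA j a) (tbar i j) = 0.
Proof.
move=> ij hG; have ji : j != i by rewrite eq_sym.
rewrite lieDl !lie_suml -big_split /= big1 // => a _.
rewrite /tbar !lie_sumr -big_split /=.
rewrite (eq_bigr (fun b => \sum_m c a b m *: (G a * eA i m * eA j b)
          + \sum_m c a b m *: (G a * eA i b * eA j m))) => [|b _]; last first.
  congr (_ + _).
    rewrite lieMl (lie_eq0Mr (hG _ _ _) (hG _ _ _)) mul0r addr0.
    rewrite lieMr lie_eAeA (lie_eAeA_neq _ _ _ ij) mulr0 addr0 mulr_suml mulr_sumr.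
    by apply: eq_bigr => m _; rewrite -An_scalerAl -An_scalerAr mulrA.
  rewrite lieMl (lie_eq0Mr (hG _ _ _) (hG _ _ _)) mul0r addr0.
  rewrite lieMr lie_eAeA (lie_eAeA_neq _ _ _ ji) mul0r add0r !mulr_sumr.
  by apply: eq_bigr => m _; rewrite -!An_scalerAr mulrA.
rewrite big_split /=.
apply: (sumZ_antisym_transpose (w := fun b m => c a b m) (fun x y => G a * eA i x * eA j y)).
by move=> b m; apply: c_antisym23.
Qed.

Lemma lie_xbarD_tbar i j : i != j -> lie (xbar i + xbar j) (tbar i j) = 0.
Proof. by move=> ij; apply: lie_sum_pair_tbar => // a l b; apply: lie_xAeA. Qed.
Lemma lie_ybarD_tbar i j : i != j -> lie (ybar i + ybar j) (tbar i j) = 0.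
Proof.
move=> ij; rewrite /ybar -opprD; apply: lie_eq0Nl.
by apply: lie_sum_pair_tbar => // a l b; apply: lie_dAeA.
Qed.

End ExactRelations.

Section IdealRelations.
Variables (F : fieldType) (d n : nat) (c : 'I_d -> 'I_d -> 'I_d -> F).
Hypotheses (hc : quadratic_lie c) (char2 : (2 : F) != 0).
Local Notation An := (@An F d n c).
Local Notation xA := (@xA F d n c).
Local Notation dA := (@dA F d n c).
Local Notation eA := (@eA F d n c).
Local Notation Xop := (@Xop F d n c).
Local Notation Yop := (@Yop F d n c).
Local Notation xbar := (@xbar F d n c).
Local Notation ybar := (@ybar F d n c).
Local Notation tbar := (@tbar F d n c).
Local Notation in_lidealY := (in_lideal Yop).

Lemma c_diag0 a b : c a b a = 0.
Proof.
have h : c a b a = - c a b a by rewrite {1}c_invariant // c_antisym.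
have : (2 : F) * c a b a = 0 by rewrite mulr_natl mulr2n {1}h addNr.
by move/eqP; rewrite mulf_eq0 (negbTE char2) => /eqP.
Qed.

Lemma sum_xA_Xop : \sum_a xA a * Xop a = 0.
Proof.
rewrite (eq_bigr (fun a => \sum_al \sum_ga c a al ga *: (xA a * xA ga * dA al))) => [|a _].
  rewrite exchange_big /= big1 // => al _.
  apply: (sumZ_antisym_sym (w := fun x y => c x al y) (G := fun x y => xA x * xA y * dA al)) => //.
    by move=> a k; apply: c_antisym13.
  by move=> a k; congr (_ * _); apply/lie_eq0/lie_xAxA.
rewrite /Xop mulr_sumr; apply: eq_bigr => al _; rewrite mulr_sumr.
by apply: eq_bigr => ga _; rewrite mulrA -An_scalerAr -An_scalerAl.
Qed.

Lemma sum_xbar_in_lideal : in_lidealY (\sum_i xbar i).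
Proof.
have -> : \sum_i xbar i = \sum_a xA a * Yop a - \sum_a xA a * Xop a.
  rewrite /xbar exchange_big /= -sumrB; apply: eq_bigr => a _.
  by rewrite -mulrBr /Yop addrC addKr mulr_sumr.
by rewrite sum_xA_Xop subr0; apply: in_lideal_sum => a _; apply: in_lideal_gen.
Qed.

Lemma sum_dA_Xop : \sum_a dA a * Xop a = 0.
Proof.
rewrite (eq_bigr (fun a => \sum_ga \sum_al c a al ga *: (xA ga * dA a * dA al))) => [|a _].
  rewrite exchange_big /= big1 // => ga _.
  apply: (sumZ_antisym_sym (w := fun x y => c x y ga) (G := fun x y => xA ga * dA x * dA y)) => //.
    by move=> a k; apply: c_antisym.
  by move=> a k; rewrite -!mulrA; congr (_ * _); apply/lie_eq0/lie_dAdA.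
rewrite exchange_big /Xop mulr_sumr; apply: eq_bigr => al _; rewrite mulr_sumr.
apply: eq_bigr => ga _; rewrite mulrA -An_scalerAr -An_scalerAl.
have -> : dA a * xA ga = xA ga * dA a + (a == ga)%:R by rewrite -lie_dAxA /lie addrC subrK.
rewrite mulrDl scalerDr; have [<-|_] := eqVneq a ga.
  by rewrite c_diag0 !scale0r addr0.
by rewrite mul0r scaler0 addr0.
Qed.

Lemma sum_ybar_in_lideal : in_lidealY (\sum_i ybar i).
Proof.
have -> : \sum_i ybar i = \sum_a dA a * Xop a - \sum_a dA a * Yop a.
  rewrite /ybar sumrN exchange_big /= -sumrB -sumrN; apply: eq_bigr => a _.
  by rewrite -mulrBr -mulr_sumr -mulrN /Yop opprD addrA subrr add0r.
by rewrite sum_dA_Xop sub0r; apply/in_lidealN/in_lideal_sum => a _; apply: in_lideal_gen.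
Qed.

Lemma lie_xbar_ybar_diag i : lie (xbar i) (ybar i) =
  \sum_a eA i a * eA i a - \sum_a \sum_b \sum_m c a b m *: (xA a * dA b * eA i m).
Proof.
rewrite /xbar /ybar lieNr lie_suml.
rewrite (eq_bigr (fun a => \sum_b \sum_m c a b m *: (xA a * dA b * eA i m)
    - \sum_b (b == a)%:R * (eA i b * eA i a))) => [|a _].
  by rewrite sumrB opprB; congr (_ - _); apply: eq_bigr => a _; rewrite sum_delta_mull.
rewrite lie_sumr -sumrB; apply: eq_bigr => b _.
rewrite lieMl lieMr lie_eAdA mul0r add0r lie_eAeA lieMr lie_xAeA mulr0 addr0 lie_xAdA.
rewrite !mulNr -mulrA mulrA mulr_sumr; congr (_ - _).
by apply: eq_bigr => m _; rewrite -An_scalerAr.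
Qed.

Lemma sum_tbar_neq i : \sum_(j | j != i) tbar i j =
  \sum_a eA i a * (Yop a - Xop a) - \sum_a eA i a * eA i a.
Proof.
have -> : \sum_a eA i a * (Yop a - Xop a) = \sum_j tbar i j.
  rewrite /tbar exchange_big /=; apply: eq_bigr => a _.
  by rewrite /Yop addrC addKr mulr_sumr.
by rewrite -[\sum_a eA i a * eA i a]/(tbar i i) [in RHS](bigD1 i) //= addrAC subrr add0r.
Qed.

(* The [X]-parts of [e^(i) Y] and of the bracket cancel: [c a b m] is
   antisymmetric in [(a, m)]. *)
Lemma sum_eA_Xop i :
  \sum_a eA i a * Xop a + \sum_a \sum_b \sum_m c a b m *: (xA a * dA b * eA i m) = 0.
Proof.
rewrite (eq_bigr (fun a => \sum_b \sum_g c a b g *: (xA g * dA b * eA i a))) => [|a _].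
  rewrite exchange_big /= [X in _ + X]exchange_big /= -big_split /= big1 // => b _.
  apply: (sumZ_antisym_transpose (w := fun a m => c a b m) (fun x y => xA x * dA b * eA i y)).
  by move=> a m; apply: c_antisym13.
rewrite /Xop mulr_sumr; apply: eq_bigr => b _; rewrite mulr_sumr.
apply: eq_bigr => g _; rewrite -An_scalerAl -An_scalerAr; congr (_ *: _).
rewrite mulrA (proj1 (lie_eq0 _ _) (lie_eAxA _ _ _ _)) -[_ * _ * dA b]mulrA.
by rewrite (proj1 (lie_eq0 _ _) (lie_eAdA _ _ _ _)) mulrA.
Qed.

Lemma diag_relation_in_lideal i :
  in_lidealY (lie (xbar i) (ybar i) + \sum_(j | j != i) tbar i j).
Proof.
rewrite lie_xbar_ybar_diag sum_tbar_neq addrC addrA subrK.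
rewrite (eq_bigr (fun a => eA i a * Yop a - eA i a * Xop a)) => [|a _]; last exact: mulrBr.
rewrite sumrB -addrA -opprD sum_eA_Xop subr0.
by apply: in_lideal_sum => a _; apply: in_lideal_gen.
Qed.

End IdealRelations.

Section Existence.
Variables (F : fieldType) (d n : nat) (c : 'I_d -> 'I_d -> 'I_d -> F).
Hypotheses (hc : quadratic_lie c) (char2 : (2 : F) != 0).
Local Notation rhoA := (@rhoA F d n c).
Local Notation Yop := (@Yop F d n c).
Local Notation tbar := (@tbar F d n c).

Lemma rhoA_in_idealizer u : in_idealizer Yop (rhoA u).
Proof.
elim: u => [[i|i|i j]| |u IHu v IHv|k u IHu|u IHu v IHv].
- by rewrite rhoA_x; apply: in_idealizer_centralizer => b; apply: lie_Yop_xbar.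
- by rewrite rhoA_y; apply: in_idealizer_centralizer => b; apply: lie_Yop_ybar.
- have [<-|ij] := eqVneq i j; first by rewrite rhoA_tii; apply: in_idealizer0.
  by rewrite rhoA_t //; apply: in_idealizer_centralizer => b; apply: lie_Yop_tbar.
- exact: in_idealizer0.
- by rewrite rhoAD; apply: in_idealizerD.
- by rewrite rhoAZ; apply: in_idealizerZ.
- by rewrite rhoA_lie; apply: in_idealizer_lie.
Qed.

Lemma rhoA_lrel u v : lrel u v -> lcong Yop (rhoA u) (rhoA v).
Proof.
case=> [i|i j ij|i j k /and3P[ij ik jk]|i j k l|i j ij|i j|i j|i|
        i j k /and3P[ij ik jk]|i j k /and3P[ij ik jk]|i j ij|i j ij||].
- by apply: lcong_eq; rewrite rhoA_tii.
- have ji : j != i by rewrite eq_sym.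
  by apply: lcong_eq; rewrite (rhoA_t c ij) (rhoA_t c ji) tbarC.
- by apply: lcong_eq; rewrite rhoA_lie rhoAD !rhoA_t // lie_tbar_4T // ij ik.
- move=> h; apply: lcong_eq; move: (h); rewrite /= !inE !negb_or.
  case/and4P=> [/and3P[ij ik il] /andP[jk jl] kl _].
  by rewrite rhoA_lie !rhoA_t // lie_tbar_disjoint.
- by apply: lcong_eq; rewrite rhoA_lie rhoA_x rhoA_y rhoA_t // lie_xbar_ybar.
- by apply: lcong_eq; rewrite rhoA_lie !rhoA_x lie_xbar_xbar.
- by apply: lcong_eq; rewrite rhoA_lie !rhoA_y lie_ybar_ybar.
- rewrite /lcong rhoA_lie rhoA_x rhoA_y rhoAZ rhoA_sum scaleN1r opprK big_map big_filter.
  rewrite enumT (eq_bigr (tbar i)) => [|j ji]; first exact: diag_relation_in_lideal.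
  by rewrite rhoA_t // eq_sym.
- by apply: lcong_eq; rewrite rhoA_lie rhoA_x rhoA_t // lie_xbar_tbar // ij ik.
- by apply: lcong_eq; rewrite rhoA_lie rhoA_y rhoA_t // lie_ybar_tbar // ij ik.
- by apply: lcong_eq; rewrite rhoA_lie rhoAD !rhoA_x rhoA_t // lie_xbarD_tbar.
- by apply: lcong_eq; rewrite rhoA_lie rhoAD !rhoA_y rhoA_t // lie_ybarD_tbar.
- apply/lcong0; rewrite rhoA_sum big_map big_enum /= (eq_bigr (@xbar F d n c)) => [|i _].
    exact: sum_xbar_in_lideal.
  exact: rhoA_x.
- apply/lcong0; rewrite rhoA_sum big_map big_enum /= (eq_bigr (@ybar F d n c)) => [|i _].
    exact: sum_ybar_in_lideal.
  exact: rhoA_y.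
Qed.

Lemma rhoA_leq u v : Defs.leq u v -> lcong Yop (rhoA u) (rhoA v).
Proof.
elim=> {u v} [u|u v _|u v w _ h1 _ h2|u u' v v' _ h1 _ h2|k u u' _|u u' v v' _ h1 _ h2|
  u v w|u v|u|u|u|k l u|k l u|k u v|u v w|u v w|k u v|k u v|u|u v w|u v].
- exact: lcong_eq.
- exact: lcong_sym.
- exact: lcong_trans h1 h2.
- by rewrite !rhoAD; apply: lcongD.
- by rewrite !rhoAZ; apply: lcongZ.
- by rewrite !rhoA_lie; apply: lcong_lie => //; apply: rhoA_in_idealizer.
- by apply: lcong_eq; rewrite !rhoAD addrA.
- by apply: lcong_eq; rewrite !rhoAD addrC.
- by apply: lcong_eq; rewrite rhoAD addr0.
- by apply: lcong_eq; rewrite rhoAD rhoAZ scaleN1r subrr.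
- by apply: lcong_eq; rewrite rhoAZ scale1r.
- by apply: lcong_eq; rewrite !rhoAZ scalerA.
- by apply: lcong_eq; rewrite rhoAD !rhoAZ scalerDl.
- by apply: lcong_eq; rewrite !(rhoAD, rhoAZ) scalerDr.
- by apply: lcong_eq; rewrite !(rhoA_lie, rhoAD) lieDl.
- by apply: lcong_eq; rewrite !(rhoA_lie, rhoAD) lieDr.
- by apply: lcong_eq; rewrite !(rhoA_lie, rhoAZ) lieZl.
- by apply: lcong_eq; rewrite !(rhoA_lie, rhoAZ) lieZr.
- by apply: lcong_eq; rewrite rhoA_lie liexx.
- by apply: lcong_eq; rewrite !rhoAD !rhoA_lie addrA lie_jacobi.
- exact: rhoA_lrel.
Qed.

Lemma is_rho_rho_term : is_rho c (@rho_term F d n).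
Proof.
have heq_refl (t : aterm F d n) : heq c t t by apply/heqE/lcong_eq.
split.
- by move=> u; apply/inNE/rhoA_in_idealizer.
- by move=> u v /rhoA_leq h; apply/heqE; apply: h.
- by split=> *; apply: heq_refl.
- by move=> *; apply: heq_refl.
- by split=> [i|i|i j ij]; rewrite /= ?(negbTE ij); apply: heq_refl.
Qed.

End Existence.

Section Uniqueness.
Variables (F : fieldType) (d n : nat) (c : 'I_d -> 'I_d -> 'I_d -> F).
Local Notation Yop := (@Yop F d n c).
Local Notation cl := (@cl F d n c).
Local Notation rhoA := (@rhoA F d n c).
Local Notation lcongY := (lcong Yop).

Section Representative.
Variable f : lterm F n -> aterm F d n.
Hypothesis hf : is_rho c f.
Local Notation fA u := (cl (f u)).

Lemma rep_in_idealizer u : in_idealizer Yop (fA u).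
Proof. by case: hf => h _ _ _ _; apply/inNE. Qed.
Lemma rep_leq u v : Defs.leq u v -> lcongY (fA u) (fA v).
Proof. by case: hf => _ h _ _ _ /h /heqE. Qed.
Lemma repD u v : lcongY (fA (LAdd u v)) (fA u + fA v).
Proof. by case: hf => _ _ [h _] _ _; rewrite -clD; apply/heqE. Qed.
Lemma repZ k u : lcongY (fA (LSc k u)) (k *: fA u).
Proof. by case: hf => _ _ [_ h] _ _; rewrite -clZ; apply/heqE. Qed.
Lemma rep_lie u v : lcongY (fA (LBr u v)) (lie (fA u) (fA v)).
Proof. by case: hf => _ _ _ h _; rewrite /lie -!clM -clB; apply/heqE. Qed.
Lemma rep0 : lcongY (fA L0) 0.
Proof.
apply/lcong0; have := lcong_trans (lcong_sym (rep_leq (leq_add0 L0))) (repD L0 L0).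
by rewrite /lcong opprD addrA subrr add0r => /in_lidealN; rewrite opprK.
Qed.

Lemma rep_gen g : lcongY (fA (LV g)) (rhoA (LV g)).
Proof.
case: hf => _ _ _ _ [hx hy ht]; case: g => [i|i|i j]; [exact/heqE/hx|exact/heqE/hy|].
have [<-|ij] := eqVneq i j; last by apply/heqE; rewrite /= (negbTE ij); apply: ht.
by rewrite rhoA_tii; apply: lcong_trans (rep_leq (leq_rel (@lrel_tii F n i))) rep0.
Qed.

End Representative.

Lemma rho_unique f g : is_rho c f -> is_rho c g ->
  forall u, lcongY (cl (f u)) (cl (g u)).
Proof.
move=> hf hg; elim=> [gen| |u IHu v IHv|k u IHu|u IHu v IHv].
- exact: lcong_via (rep_gen hf gen) (rep_gen hg gen) (lcong_refl _ _).
- exact: lcong_via (rep0 hf) (rep0 hg) (lcong_refl _ _).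
- exact: lcong_via (repD hf u v) (repD hg u v) (lcongD IHu IHv).
- exact: lcong_via (repZ hf k u) (repZ hg k u) (lcongZ k IHu).
- apply: lcong_via (rep_lie hf u v) (rep_lie hg u v) (lcong_lie IHu IHv _ _).
    exact: rep_in_idealizer hg u.
  exact: rep_in_idealizer hf v.
Qed.

End Uniqueness.

Theorem mainTheorem10 (F : numClosedFieldType) (d n : nat)
    (c : 'I_d -> 'I_d -> 'I_d -> F) (hc : quadratic_lie c) :
  (exists f : lterm F n -> aterm F d n, is_rho c f) /\
  (forall f g : lterm F n -> aterm F d n, is_rho c f -> is_rho c g ->
     forall u, heq c (f u) (g u)).
Proof.
have char2 : (2 : F) != 0 by rewrite pnatr_eq0.
split; first by exists (@rho_term F d n); apply: is_rho_rho_term.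
by move=> f g hf hg u; apply/heqE/rho_unique.
Qed.
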